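(* In the timely decision problem described in the context, define $\alpha_0=\beta_0=0\in\mathbb{R}^{\Theta}$ and, for $t\ge1$ and $\theta\in\Theta$, with $\bar p_t\doteq\sum_{\theta'\in\Theta}p_{\theta',\lambda_{t-1}}\mu_{t-1}(\theta')$, $$\alpha_t(\theta)=\alpha_{t-1}(\theta)-\mu_{t-1}(\theta)\,\nu_{t-1}\nu_t\,\frac{p_{\theta,\lambda_{t-1}}-\bar p_t}{1-\bar p_t},\qquad \beta_t(\theta)=\beta_{t-1}(\theta)+\mu_{t-1}(\theta)\,\nu_{t-1}(1-\nu_t)\,\frac{p_{\theta,\lambda_{t-1}}-\bar p_t}{\bar p_t}.$$ Then the posterior decomposes as $\mu_t=\tilde\mu_t+\alpha_t+\beta_t$, where $\tilde\mu_t\doteq\mu_t-\alpha_t-\beta_t$ is a martingale: $\mathbb{E}[\tilde\mu_t-\tilde\mu_{t-1}\mid \lambda_{t-1},\mu_{t-1},\nu_{t-1}]=0$ for all $t\ge1$. Here $\tilde\mu_t$ captures the information from the acquired outcomes, $\alpha_t$ (a function of $\mu_{t-1},\lambda_{t-1},\nu_{t-1},\nu_t$ and the past) compensates for the bias due to survival, and $\beta_t$ compensates for the bias due to stoppage.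
   Context: $\Theta,\Lambda,\Omega$ are finite nonempty sets; $\Delta(\Theta)$ is the simplex over $\Theta$. For $\theta\in\Theta,\lambda\in\Lambda$, $q_{\theta,\lambda}$ is a known distribution on $\Omega$ and $p_{\theta,\lambda}\in(0,1)$. A latent $\theta\sim\mu_0$ (known prior). Survival process $\nu_t\in\{0,1\}$, $\nu_0=1$. At each time $t$ with $\nu_t=1$ an acquisition $\lambda_t\in\Lambda$ is chosen as a (possibly randomized) function of the observed history; given $\theta,\nu_t=1,\lambda_t$, $\nu_{t+1}=0$ with probability $p_{\theta,\lambda_t}$, otherwise $\nu_{t+1}=1$ and an outcome $\omega_{t+1}\sim q_{\theta,\lambda_t}$ is observed, conditionally independent of the past given $\theta,\lambda_t$; once $\nu_t=0$ nothing more happens and $\nu$ stays $0$. $\mu_t\in\Delta(\Theta)$ is the posterior of $\theta$ given the observed history ($\lambda_{0:t-1}$, $\nu_{1:t}$, observed outcomes); it satisfies $\mu_t=\mu_{t-1}$ if $\nu_{t-1}=0$, $\mu_t(\theta)\propto p_{\theta,\lambda_{t-1}}\mu_{t-1}(\theta)$ if $\nu_{t-1}=1,\nu_t=0$, and $\mu_t(\theta)\propto(1-p_{\theta,\lambda_{t-1}})q_{\theta,\lambda_{t-1}}(\omega_t)\mu_{t-1}(\theta)$ if $\nu_t=1$. *)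

From HB Require Import structures.
From mathcomp Require Import all_boot all_order all_algebra.
From mathcomp Require Import reals.
Set Implicit Arguments. Unset Strict Implicit. Unset Printing Implicit Defensive.
Import Order.TTheory GRing.Theory Num.Theory.
Local Open Scope ring_scope.

(* A path is a sequence of steps x : option (L * option O):
     Some (l, Some w) : acquisition l chosen, survived, outcome w observed;
     Some (l, None)   : acquisition l chosen, stopped (nu becomes 0);
     None             : already stopped, nothing happens (padding).
   The k-th step (0-indexed) of a path is the transition from time k to k+1. *)

Section Model.
Variables (R : realType) (Th L O : finType).
Variables (p : Th -> L -> R) (q : Th -> L -> O -> R) (mu0 : Th -> R).
(* behavioural (randomized) policy: distribution over L given observed history *)
Variable pi : seq (option (L * option O)) -> L -> R.

Definition survived (x : option (L * option O)) : bool :=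
  if x is Some (_, Some _) then true else false.

Definition alive (h : seq (option (L * option O))) : bool := all survived h.
Definition nu (k : nat) (h : seq (option (L * option O))) : bool := alive (take k h).

(* lambda_k (None if no acquisition is made at time k, i.e. already stopped) *)
Definition lam (k : nat) (h : seq (option (L * option O))) : option L :=
  if nth None h k is Some (l, _) then Some l else None.

Definition emit (th : Th) (l : L) (o : option O) : R :=
  if o is Some w then (1 - p th l) * q th l w else p th l.

Definition trans (th : Th) (h : seq (option (L * option O))) (x : option (L * option O)) : R :=
  if alive h then (if x is Some (l, o) then pi h l * emit th l o else 0)
  else (if x is None then 1 else 0).

Definition joint (th : Th) (h : seq (option (L * option O))) : R :=
  mu0 th * \prod_(i < size h) trans th (take i h) (nth None h i).

Definition post (h : seq (option (L * option O))) : {ffun Th -> R} :=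
  [ffun th => joint th h / \sum_(th' : Th) joint th' h].

Definition pbar (m : {ffun Th -> R}) (l : L) : R := \sum_(th : Th) p th l * m th.

Fixpoint alpha (k : nat) (h : seq (option (L * option O))) (th : Th) : R :=
  match k with
  | 0 => 0
  | k'.+1 => alpha k' h th -
      (if lam k' h is Some l then
         let m := post (take k' h) in let pb := pbar m l in
         m th * (nu k' h)%:R * (nu k'.+1 h)%:R * ((p th l - pb) / (1 - pb))
       else 0)
  end.

Fixpoint beta (k : nat) (h : seq (option (L * option O))) (th : Th) : R :=
  match k with
  | 0 => 0
  | k'.+1 => beta k' h th +
      (if lam k' h is Some l then
         let m := post (take k' h) in let pb := pbar m l in
         m th * (nu k' h)%:R * (1 - (nu k'.+1 h)%:R) * ((p th l - pb) / pb)
       else 0)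
  end.

Definition mutilde (k : nat) (h : seq (option (L * option O))) (th : Th) : R :=
  post (take k h) th - alpha k h th - beta k h th.

End Model.

From Pilot Require Import Defs.
From HB Require Import structures.
From mathcomp Require Import all_boot all_order all_algebra.
From mathcomp Require Import reals.
From mathcomp Require Import ring.
Set Implicit Arguments. Unset Strict Implicit. Unset Printing Implicit Defensive.
Import Order.TTheory GRing.Theory Num.Theory.
Local Open Scope ring_scope.

(* Split a path of length t into its first t-1 steps g and its last step x.
   Conditioned on g and on the acquisition made after g, the increment of the
   posterior has mean zero (Bayes' rule: the posterior is a martingale), and
   the two compensator increments have opposite means: on survival alpha
   moves by -mu(th) (p_th - pbar)/(1 - pbar), which happens with probability
   1 - pbar, and on stoppage beta moves by mu(th) (p_th - pbar)/pbar, which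
   happens with probability pbar. *)

Lemma take_size_rcons (T : Type) (s : seq T) x : take (size s) (rcons s x) = s.
Proof. by rewrite -cats1 take_size_cat. Qed.

Lemma big_option (R : Type) (idx : R) (op : Monoid.com_law idx)
    (T : finType) (F : option T -> R) :
  \big[op/idx]_(x : option T) F x = op (F None) (\big[op/idx]_(y : T) F (Some y)).
Proof.
rewrite (bigD1 None) //=; congr (op _ _).
rewrite (@reindex_omap _ _ _ _ _ Some id) /=; last by case.
by apply: eq_bigl => y; rewrite eqxx.
Qed.

Lemma big_tuple_rcons (R : Type) (idx : R) (op : Monoid.com_law idx)
    (T : finType) (n : nat) (F : n.+1.-tuple T -> R) :
  \big[op/idx]_(h : n.+1.-tuple T) F h
  = \big[op/idx]_(g : n.-tuple T) \big[op/idx]_(x : T) F [tuple of rcons g x].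
Proof.
rewrite pair_big /=.
pose unrcons (h : n.+1.-tuple T) : n.-tuple T * T :=
  ([tuple of belast (thead h) (behead h)], last (thead h) (behead h)).
have thead_behead (h : n.+1.-tuple T) : thead h :: behead h = h.
  by case: h => -[].
rewrite (@reindex _ _ _ _ _ (fun gx : n.-tuple T * T => [tuple of rcons gx.1 gx.2])) //=.
exists unrcons => [[g x] _ | h _]; last first.
  by apply: val_inj; rewrite /= -lastI thead_behead.
rewrite /unrcons; set h := [tuple of rcons g x].
have /rcons_inj[g_eq x_eq] : rcons g x = rcons (belast (thead h) (behead h))
                                              (last (thead h) (behead h)).
  by rewrite -lastI thead_behead.
by congr (_, _); [apply: val_inj|].
Qed.

Lemma psumr_pmul_neq0 (R : numDomainType) (I : finType) (f w : I -> R) :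
    (forall i, 0 < f i) -> (forall i, 0 <= w i) ->
  (\sum_i f i * w i != 0) = (\sum_i w i != 0).
Proof.
move=> f_gt0 w_ge0; rewrite !psumr_neq0 // => [|i _]; last first.
  by rewrite mulr_ge0 // ltW.
by apply: eq_has => i /=; rewrite pmulr_rgt0.
Qed.

Section OneStep.
Variables (R : realType) (Th L O : finType).
Variables (p : Th -> L -> R) (q : Th -> L -> O -> R) (mu0 : Th -> R).
Variable pi : seq (option (L * option O)) -> L -> R.
Hypothesis hp : forall th l, 0 < p th l < 1.
Hypothesis hq0 : forall th l w, 0 <= q th l w.
Hypothesis hq1 : forall th l, \sum_(w : O) q th l w = 1.
Hypothesis hmu0 : forall th, 0 <= mu0 th.
Hypothesis hpi0 : forall h l, 0 <= pi h l.

Local Notation step := (option (L * option O)).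
Local Notation joint := (joint p q mu0 pi).
Local Notation post := (post p q mu0 pi).
Local Notation trans := (trans p q pi).
Local Notation emit := (emit p q).
Local Notation pbar := (pbar p).
Local Notation mutilde := (mutilde p q mu0 pi).

Definition mass (h : seq step) : R := \sum_th joint th h.

Definition acquisition (x : step) : option L :=
  if x is Some (l, _) then Some l else None.

Definition alpha_incr (g : seq step) (x : step) (th : Th) : R :=
  if x is Some (l, _) then
    let pb := pbar (post g) l in
    - (post g th * (alive g)%:R * (alive (rcons g x))%:R * ((p th l - pb) / (1 - pb)))
  else 0.

Definition beta_incr (g : seq step) (x : step) (th : Th) : R :=
  if x is Some (l, _) then
    let pb := pbar (post g) l in
    post g th * (alive g)%:R * (1 - (alive (rcons g x))%:R) * ((p th l - pb) / pb)
  else 0.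

Lemma joint_rcons th g x : joint th (rcons g x) = joint th g * trans th g x.
Proof.
rewrite /Defs.joint size_rcons big_ord_recr /= -mulrA; congr (_ * (_ * _)).
- apply: eq_bigr => i _.
  by rewrite -cats1 takel_cat ?nth_cat ?ltn_ord // ltnW.
- by rewrite -cats1 take_size_cat // nth_cat ltnn subnn.
Qed.

Lemma emit_ge0 th l o : 0 <= emit th l o.
Proof.
have /andP[p_gt0 p_lt1] := hp th l.
by case: o => [w|] /=; rewrite ?mulr_ge0 ?subr_ge0 ?hq0 ?ltW.
Qed.

Lemma sum_emit th l : \sum_o emit th l o = 1.
Proof. by rewrite big_option /= -mulr_sumr hq1 mulr1 addrC subrK. Qed.

Lemma joint_ge0 th h : 0 <= joint th h.
Proof.
rewrite /Defs.joint mulr_ge0 // prodr_ge0 // => i _.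
rewrite /Defs.trans; case: alive; case: nth => [[l o]|] //.
by rewrite mulr_ge0 ?emit_ge0.
Qed.

Lemma mass_post h th : mass h * post h th = joint th h.
Proof.
rewrite /Defs.post ffunE -/(mass h).
have [mass0|mass_neq0] := eqVneq (mass h) 0; last by rewrite mulrC divfK.
by rewrite mass0 mul0r (psumr_eq0P (fun th _ => joint_ge0 th h) mass0).
Qed.

Lemma mass_pbar g l : mass g * pbar (post g) l = \sum_th p th l * joint th g.
Proof.
by rewrite /Defs.pbar mulr_sumr; apply: eq_bigr => th _; rewrite mulrCA mass_post.
Qed.

Lemma mass_one_minus_pbar g l :
  mass g * (1 - pbar (post g) l) = \sum_th (1 - p th l) * joint th g.
Proof.
under eq_bigr do rewrite mulrBl mul1r.
by rewrite sumrB mulrBr mulr1 mass_pbar.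
Qed.

Lemma pbar_neq0 g l : mass g != 0 -> pbar (post g) l != 0.
Proof.
move=> mass_neq0; have : \sum_th p th l * joint th g != 0.
  by rewrite psumr_pmul_neq0 // => th; [case/andP: (hp th l)|apply: joint_ge0].
by rewrite -mass_pbar mulf_eq0 negb_or => /andP[].
Qed.

Lemma one_minus_pbar_neq0 g l : mass g != 0 -> 1 - pbar (post g) l != 0.
Proof.
move=> mass_neq0; have : \sum_th (1 - p th l) * joint th g != 0.
  rewrite psumr_pmul_neq0 // => th; last exact: joint_ge0.
  by case/andP: (hp th l); rewrite subr_gt0.
by rewrite -mass_one_minus_pbar mulf_eq0 negb_or => /andP[].
Qed.

Section Alive.
Variable g : seq step.
Hypothesis g_alive : alive g.

Lemma joint_rcons_alive th l o :
  joint th (rcons g (Some (l, o))) = pi g l * (joint th g * emit th l o).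
Proof. by rewrite joint_rcons /Defs.trans g_alive mulrCA. Qed.

Lemma alive_rcons_alive l o : alive (rcons g (Some (l, o))) = (o != None).
Proof. by move: g_alive; rewrite /alive all_rcons => ->; case: o. Qed.

Lemma sum_mass_rcons_alive l : \sum_o mass (rcons g (Some (l, o))) = pi g l * mass g.
Proof.
rewrite exchange_big mulr_sumr; apply: eq_bigr => th _ /=.
by under eq_bigr do rewrite joint_rcons_alive; rewrite -!mulr_sumr sum_emit mulr1.
Qed.

Lemma post_martingale l th :
  \sum_o mass (rcons g (Some (l, o))) * (post (rcons g (Some (l, o))) th - post g th) = 0.
Proof.
under eq_bigr do rewrite mulrBr mass_post joint_rcons_alive.
rewrite sumrB -!mulr_sumr -mulr_suml sum_emit sum_mass_rcons_alive.
by rewrite mulr1 -mulrA mass_post subrr.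
Qed.

Lemma mass_stop l : mass (rcons g (Some (l, None))) = pi g l * (mass g * pbar (post g) l).
Proof.
rewrite mass_pbar mulr_sumr; apply: eq_bigr => th _.
by rewrite joint_rcons_alive (mulrC (joint th g)).
Qed.

Lemma compensators_balance l th :
  \sum_o mass (rcons g (Some (l, o)))
           * (alpha_incr g (Some (l, o)) th + beta_incr g (Some (l, o)) th) = 0.
Proof.
have mass_survive : \sum_w mass (rcons g (Some (l, Some w)))
                    = pi g l * (mass g * (1 - pbar (post g) l)).
  have := sum_mass_rcons_alive l; rewrite big_option /= mass_stop.
  by move=> /(canRL (addKr _)) ->; ring.
rewrite big_option /alpha_incr /beta_incr /= g_alive alive_rcons_alive.
under eq_bigr do rewrite alive_rcons_alive.
rewrite /= -mulr_suml mass_survive mass_stop.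
have [mass0|mass_neq0] := eqVneq (mass g) 0; first by rewrite mass0; ring.
by field; rewrite pbar_neq0 ?one_minus_pbar_neq0.
Qed.

End Alive.

Section Dead.
Variable g : seq step.
Hypothesis g_dead : ~~ alive g.

Lemma joint_rcons_dead th x :
  joint th (rcons g x) = if x is None then joint th g else 0.
Proof. by rewrite joint_rcons /Defs.trans (negbTE g_dead); case: x; rewrite ?mulr1 ?mulr0. Qed.

Lemma mass_rcons_dead l o : mass (rcons g (Some (l, o))) = 0.
Proof. by apply: big1 => th _; rewrite joint_rcons_dead. Qed.

Lemma post_rcons_dead : post (rcons g None) = post g.
Proof.
apply/ffunP => th; rewrite /Defs.post !ffunE joint_rcons_dead.
by under eq_bigr do rewrite joint_rcons_dead.
Qed.

End Dead.

Lemma sum_acquisition_None (F : step -> R) :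
  \sum_(x | acquisition x == None) F x = F None.
Proof. by rewrite (big_pred1 None) // => -[[]|]. Qed.

Lemma sum_acquisition_Some l (F : step -> R) :
  \sum_(x | acquisition x == Some l) F x = \sum_o F (Some (l, o)).
Proof.
pose last_outcome (x : step) := if x is Some (_, o) then Some o else None.
rewrite (reindex_omap (fun o => Some (l, o)) last_outcome) /=.
  by apply: eq_bigl => o; rewrite !eqxx.
by case=> [[l' o]|] //= /eqP[->].
Qed.

Lemma martingale_step g l th :
  \sum_(x | acquisition x == l)
     mass (rcons g x) * (post (rcons g x) th - post g th - alpha_incr g x th - beta_incr g x th)
  = 0.
Proof.
case: l => [l|]; last first.
  rewrite sum_acquisition_None /alpha_incr /beta_incr !subr0.
  have [g_alive|g_dead] := boolP (alive g); last by rewrite post_rcons_dead // subrr mulr0.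
  by rewrite /mass big1 ?mul0r // => th' _; rewrite joint_rcons /Defs.trans g_alive mulr0.
rewrite sum_acquisition_Some.
have [g_alive|g_dead] := boolP (alive g); last first.
  by apply: big1 => o _; rewrite mass_rcons_dead ?mul0r.
under eq_bigr do rewrite -addrA -opprD mulrBr.
by rewrite sumrB post_martingale // compensators_balance // subrr.
Qed.

Lemma lam_rcons (g : seq step) x : lam (size g) (rcons g x) = acquisition x.
Proof. by rewrite /lam nth_rcons ltnn eqxx; case: x => [[]|]. Qed.

Lemma nu_rcons (g : seq step) x : nu (size g) (rcons g x) = alive g.
Proof. by rewrite /nu take_size_rcons. Qed.

Lemma mutilde_rcons g x th :
  mutilde (size g).+1 (rcons g x) th - mutilde (size g) (rcons g x) th
  = post (rcons g x) th - post g th - alpha_incr g x th - beta_incr g x th.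
Proof.
rewrite /Defs.mutilde /= lam_rcons nu_rcons /nu take_oversize ?size_rcons //.
by rewrite take_size_rcons; case: x => [[l o]|] /=; ring.
Qed.

End OneStep.

Theorem proposition2 (R : realType) (Th L O : finType)
  (p : Th -> L -> R) (q : Th -> L -> O -> R) (mu0 : Th -> R)
  (pi : seq (option (L * option O)) -> L -> R)
  (hp : forall th l, 0 < p th l < 1)
  (hq0 : forall th l w, 0 <= q th l w)
  (hq1 : forall th l, \sum_(w : O) q th l w = 1)
  (hmu0 : forall th, 0 <= mu0 th)
  (hmu1 : \sum_(th : Th) mu0 th = 1)
  (hpi0 : forall h l, 0 <= pi h l)
  (hpi1 : forall h, \sum_(l : L) pi h l = 1) :
  (forall (t : nat) (h : seq (option (L * option O))) (th : Th),
     post p q mu0 pi (take t h) th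
     = mutilde p q mu0 pi t h th + alpha p q mu0 pi t h th + beta p q mu0 pi t h th) /\
  (forall (t : nat), (0 < t)%N ->
   forall (l : option L) (m : {ffun Th -> R}) (n : bool) (th : Th),
     \sum_(th' : Th)
       \sum_(h : t.-tuple (option (L * option O)) |
               (lam t.-1 h == l) && (post p q mu0 pi (take t.-1 h) == m)
               && (nu t.-1 h == n))
         joint p q mu0 pi th' h
           * (mutilde p q mu0 pi t h th - mutilde p q mu0 pi t.-1 h th) = 0).
Proof.
split=> [t h th | [//|s] _ l m n th /=]; first by rewrite /mutilde addrAC !subrK.
rewrite exchange_big big_mkcond big_tuple_rcons /=.
apply: big1 => -[g /= /eqP size_g] _; subst s.
under eq_bigr do
  rewrite -mulr_suml lam_rcons nu_rcons take_size_rcons mutilde_rcons -andbA andbC.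
case: ((post p q mu0 pi g == m) && (alive g == n)); last exact: big1.
by rewrite -big_mkcond; apply: martingale_step.
Qed.
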